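(* Consider the discrete-time system $x_{t+1} = A x_t + B u_t + E w_t + K$ with $x_t \in \mathbb{R}^{n_x}$, $u_t \in U \subseteq \mathbb{R}^{n_u}$, $w_t \in W \subseteq \mathbb{R}^{n_w}$, where $A \in \mathbb{R}^{n_x \times n_x}$ is invertible, $B \in \mathbb{R}^{n_x \times n_u}$, $E \in \mathbb{R}^{n_x \times n_w}$, $K \in \mathbb{R}^{n_x}$, $U$ is a zonotope, and $W$ is a polytope with vertex set $V = \{w_1,\dots,w_M\}$. Let $Z_0 \subseteq \mathbb{R}^{n_x}$ be a zonotope and define the backward reachable sets $X_0 = Z_0$ and, for $k \geq 0$, $$X_{k+1} = \{x \in \mathbb{R}^{n_x} \mid \exists u \in U\ \forall w \in W: Ax + Bu + Ew + K \in X_k\}.$$ Let $H, h$ satisfy $EW = \{x \mid Hx \leq h\}$, and fix constants $b_i > 0$, $d_i \geq 0$. For a zonotope $Z = ([g_1, \dots, g_N], c)$ define $\overline{\mathfrak{Z}}(Z, EW) = ([\overline{\alpha}_1 g_1, \dots, \overline{\alpha}_N g_N], \overline{c})$ where $(\theta, \overline{\alpha}, \overline{c})$ is a minimizer of $\min \sum_i b_i \alpha_i$ subject to $c' + \sum_i \theta_{ij} g_i = E w_j$ for all $j$ and $|\theta_{ij}| \leq \alpha_i \leq 1$, and define $\underline{\mathfrak{Z}}(Z, EW) = ([\underline{\alpha}_1 g_1, \dots, \underline{\alpha}_N g_N], \underline{c})$ where $(\underline{\alpha}, \underline{c})$ is a maximizer of $\max \sum_i d_i \log \alpha_i$ subject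 to $Hc' + |HG|\alpha \leq h$, $0 \leq \alpha \leq 1$ (with $G = [g_1,\dots,g_N]$). Define recursively $\underline{Z}_0 = \overline{Z}_0 = Z_0$ and $$\underline{Z}_{k+1} = A^{-1}\big(((\underline{Z}_k \ominus \overline{\mathfrak{Z}}(\underline{Z}_k, EW)) \oplus (-BU)) + (-K)\big),$$ $$\overline{Z}_{k+1} = A^{-1}\big(((\overline{Z}_k \ominus \underline{\mathfrak{Z}}(\overline{Z}_k, EW)) \oplus (-BU)) + (-K)\big),$$ assuming all the optimization problems involved have optimal solutions (so that these sequences are defined). Then $\underline{Z}_k \subseteq X_k \subseteq \overline{Z}_k$ for all $k \geq 0$.
   Context: A zonotope with generator-representation $(G, c)$, where $G = [g_1, \dots, g_N]$ and $c \in \mathbb{R}^n$, is the set $\{c + \sum_{i=1}^N \theta_i g_i \mid \theta_i \in [-1,1]\}$, denoted $(G,c)$. For a matrix $M$ and set $S$, $MS = \{Ms \mid s \in S\}$. Minkowski sum $X \oplus Y = \{x+y \mid x\in X, y\in Y\}$, $x + Y = \{x\}\oplus Y$, Minkowski difference $X \ominus Y = \{z \mid z + Y \subseteq X\}$. $|HG|$ denotes entrywise absolute value; vector inequalities are entrywise. *)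

From HB Require Import structures.
From mathcomp Require Import all_boot all_order all_algebra.
From mathcomp Require Import classical_sets boolp reals constructive_ereal ereal exp.
Set Implicit Arguments. Unset Strict Implicit. Unset Printing Implicit Defensive.
Import Order.TTheory GRing.Theory Num.Theory.
Local Open Scope classical_set_scope.
Local Open Scope ring_scope.

(* A zonotope generator-representation (G, c) with G = [g_1 ... g_N]. *)
Record zrep (R : realType) (n : nat) := ZRep {
  zN : nat;
  zG : 'M[R]_(n, zN);
  zc : 'cV[R]_n }.

Section Zono.
Variable R : realType.

Definition zset n (Z : zrep R n) : set 'cV[R]_n :=
  [set x | exists th : 'cV[R]_(zN Z),
     (forall i, `|th i ord0| <= 1) /\ x = zc Z + zG Z *m th].

Definition lev p (x y : 'cV[R]_p) : Prop := forall i, x i ord0 <= y i ord0.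

Definition msum n (X Y : set 'cV[R]_n) : set 'cV[R]_n :=
  [set z | exists x y, X x /\ Y y /\ z = x + y].

Definition mdiff n (X Y : set 'cV[R]_n) : set 'cV[R]_n :=
  [set z | forall y, Y y -> X (z + y)].

Definition linimg m n (M : 'M[R]_(m, n)) (S : set 'cV[R]_n) : set 'cV[R]_m :=
  (fun x => M *m x) @` S.

Definition translate n (v : 'cV[R]_n) (S : set 'cV[R]_n) : set 'cV[R]_n :=
  (fun x => x + v) @` S.

Definition conv_cols n M (Wv : 'M[R]_(n, M)) : set 'cV[R]_n :=
  [set x | exists l : 'cV[R]_M, (forall j, 0 <= l j ord0) /\
     \sum_j l j ord0 = 1 /\ x = Wv *m l].

Definition extreme_point n (W : set 'cV[R]_n) (x : 'cV[R]_n) : Prop :=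
  W x /\ forall y z (t : R), W y -> W z -> 0 < t < 1 ->
    x = t *: y + (1 - t) *: z -> y = x /\ z = x.

Definition polytope_with_vertices n M (W : set 'cV[R]_n) (Wv : 'M[R]_(n, M)) : Prop :=
  W = conv_cols Wv /\ forall x, extreme_point W x <-> exists j, x = col j Wv.

Definition scale_gens n (Z : zrep R n) (a : 'cV[R]_(zN Z)) (c' : 'cV[R]_n) : zrep R n :=
  @ZRep R n (zN Z) (\matrix_(r, i) (a i ord0 * zG Z r i)) c'.

Definition over_feasible n nw M (Z : zrep R n) (E : 'M[R]_(n, nw)) (Wv : 'M[R]_(nw, M))
  (th : 'M[R]_(zN Z, M)) (a : 'cV[R]_(zN Z)) (c' : 'cV[R]_n) : Prop :=
  (forall j : 'I_M, c' + \sum_(i < zN Z) th i j *: col i (zG Z) = E *m col j Wv) /\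
  (forall i j, `|th i j| <= a i ord0) /\ (forall i, a i ord0 <= 1).

Definition over_obj N (b : nat -> R) (a : 'cV[R]_N) : R :=
  \sum_(i < N) b i * a i ord0.

Definition over_minimizer n nw M (Z : zrep R n) (E : 'M[R]_(n, nw)) (Wv : 'M[R]_(nw, M))
  (b : nat -> R) (th : 'M[R]_(zN Z, M)) (a : 'cV[R]_(zN Z)) (c' : 'cV[R]_n) : Prop :=
  over_feasible E Wv th a c' /\
  forall th' a' c'', @over_feasible n nw M Z E Wv th' a' c'' -> over_obj b a <= over_obj b a'.

Definition logE (a : R) : \bar R := if 0 < a then (ln a)%:E else -oo%E.

Definition under_feasible n p (Z : zrep R n) (H : 'M[R]_(p, n)) (h : 'cV[R]_p)
  (a : 'cV[R]_(zN Z)) (c' : 'cV[R]_n) : Prop :=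
  lev (H *m c' + map_mx (fun x => `|x|) (H *m zG Z) *m a) h /\
  (forall i, 0 <= a i ord0 <= 1).

Definition under_obj N (d : nat -> R) (a : 'cV[R]_N) : \bar R :=
  (\sum_(i < N) ((d i)%:E * logE (a i ord0)))%E.

Definition under_maximizer n p (Z : zrep R n) (H : 'M[R]_(p, n)) (h : 'cV[R]_p)
  (d : nat -> R) (a : 'cV[R]_(zN Z)) (c' : 'cV[R]_n) : Prop :=
  under_feasible H h a c' /\
  forall a' c'', @under_feasible n p Z H h a' c'' -> (under_obj d a' <= under_obj d a)%E.

Fixpoint Xback nx nu nw (A : 'M[R]_nx) (B : 'M[R]_(nx, nu)) (E : 'M[R]_(nx, nw))
  (K : 'cV[R]_nx) (U : set 'cV[R]_nu) (W : set 'cV[R]_nw) (X0 : set 'cV[R]_nx)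
  (k : nat) : set 'cV[R]_nx :=
  match k with
  | 0 => X0
  | k'.+1 => [set x | exists u, U u /\ forall w, W w ->
               Xback A B E K U W X0 k' (A *m x + B *m u + E *m w + K)]
  end.

Definition step_set nx nu (A : 'M[R]_nx) (B : 'M[R]_(nx, nu)) (K : 'cV[R]_nx)
  (U : set 'cV[R]_nu) (Z Zs : set 'cV[R]_nx) : set 'cV[R]_nx :=
  linimg (invmx A)
    (translate (- K) (msum (mdiff Z Zs) (linimg (- B) U))).

End Zono.

Arguments over_minimizer {R n nw M} Z E Wv b th a c'.
Arguments under_maximizer {R n p} Z H h d a c'.
Arguments scale_gens {R n} Z a c'.

From HB Require Import structures.
From mathcomp Require Import all_boot all_order all_algebra.
From mathcomp Require Import classical_sets boolp reals constructive_ereal ereal exp.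
Import Order.TTheory GRing.Theory Num.Theory.
Local Open Scope classical_set_scope.
Local Open Scope ring_scope.

(* Both recursions have the shape
   A^-1 ((Z (-) Zs) (+) (-BU) + (-K)); this set is contained in the robust
   one-step predecessor of X when Z is inside X and EW is inside Zs, and
   contains it when X is inside Z and Zs is inside EW.  A feasible point of the
   LP writes every vertex E w_j as c' + G theta_j with |theta_ij| <= alpha_i,
   and averaging these coordinates puts all of EW into the scaled zonotope.
   A feasible point of the log problem gives H x <= H c' + |HG| alpha <= h on
   the scaled zonotope, i.e. puts it inside EW. *)

Definition robust_pre {R : realType} {nx nu nw : nat} (A : 'M[R]_nx)
    (B : 'M[R]_(nx, nu)) (E : 'M[R]_(nx, nw)) (K : 'cV[R]_nx)
    (U : set 'cV[R]_nu) (W : set 'cV[R]_nw) (X : set 'cV[R]_nx) : set 'cV[R]_nx :=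
  [set x | exists u, U u /\ forall w, W w -> X (A *m x + B *m u + E *m w + K)].

Section RobustPredecessor.
Context {R : realType}.
Context {nx nu nw : nat} {A : 'M[R]_nx} {B : 'M[R]_(nx, nu)} {E : 'M[R]_(nx, nw)}.
Context {K : 'cV[R]_nx} {U : set 'cV[R]_nu} {W : set 'cV[R]_nw}.
Hypothesis A_unit : A \in unitmx.

Lemma XbackS X0 k :
  Xback A B E K U W X0 k.+1 = robust_pre A B E K U W (Xback A B E K U W X0 k).
Proof. by []. Qed.

Lemma step_set_sub_robust_pre {Z Zs X : set 'cV[R]_nx} :
  Z `<=` X -> (fun w => E *m w) @` W `<=` Zs ->
  step_set A B K U Z Zs `<=` robust_pre A B E K U W X.
Proof.
move=> ZX EWZs _ [_ [_ [z [_ [Zz [[u Uu <-] ->]]] <-] <-]].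
exists u; split=> // w Ww; rewrite mulKVmx //.
have -> : z + - B *m u + - K + B *m u + E *m w + K = z + E *m w.
  by rewrite mulNmx (addrAC (z - _) (- K)) addrNK (addrAC (z - K)) addrNK.
by apply/ZX/Zz/EWZs; exists w.
Qed.

Lemma robust_pre_sub_step_set {Z Zs X : set 'cV[R]_nx} :
  X `<=` Z -> Zs `<=` (fun w => E *m w) @` W ->
  robust_pre A B E K U W X `<=` step_set A B K U Z Zs.
Proof.
move=> XZ ZsEW x [u [Uu Xx]].
exists (A *m x); last by rewrite mulKmx.
exists (A *m x + K); last by rewrite addrK.
exists (A *m x + K + B *m u), (- B *m u); split; last split.
- move=> _ /ZsEW [w Ww <-]; apply: XZ.
  by rewrite (addrAC _ K) (addrAC _ K); apply: Xx.
- by exists u.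
- by rewrite mulNmx addrK.
Qed.

End RobustPredecessor.

Section ScaledZonotope.
Context {R : realType}.

Lemma mulmx_sum_col {m n} (M : 'M[R]_(m, n)) (v : 'cV[R]_n) :
  M *m v = \sum_i v i ord0 *: col i M.
Proof.
apply/matrixP => r k; rewrite ord1 summxE !mxE.
by apply: eq_bigr => i _; rewrite !mxE mulrC.
Qed.

Lemma lev_mulmx_norm {m n} (M : 'M[R]_(m, n)) (t a : 'cV[R]_n) :
  (forall i, `|t i ord0| <= a i ord0) -> lev (M *m t) (map_mx (fun x => `|x|) M *m a).
Proof.
move=> ta q; rewrite !mxE; apply: le_trans (ler_norm _) _.
apply: le_trans (ler_norm_sum _ _ _) _; apply: ler_sum => i _.
by rewrite mxE normrM ler_wpM2l.
Qed.

Lemma zG_scale_gens {n} (Z : zrep R n) (a : 'cV[R]_(zN Z)) (c' : 'cV[R]_n) :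
  zG (scale_gens Z a c') = zG Z *m diag_mx a^T.
Proof. by apply/matrixP => r i; rewrite mul_mx_diag !mxE mulrC. Qed.

Lemma scale_gens_mem {n} (Z : zrep R n) (a t : 'cV[R]_(zN Z)) (c' : 'cV[R]_n) :
  (forall i, `|t i ord0| <= a i ord0) -> zset (scale_gens Z a c') (c' + zG Z *m t).
Proof.
move=> ta; exists (\col_i (t i ord0 / a i ord0)); split=> [i|].
  rewrite mxE normrM normfV; have [->|a0] := eqVneq (a i ord0) 0.
    by rewrite normr0 invr0 mulr0 ler01.
  by rewrite ler_pdivrMr ?normr_gt0 // mul1r (le_trans (ta i) (ler_norm _)).
rewrite zG_scale_gens -mulmxA mul_diag_mx; congr (_ + _ *m _).
apply/matrixP => i j; rewrite ord1 !mxE; have [a0|a0] := eqVneq (a i ord0) 0.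
  (* [t i / 0 = 0] is the right coordinate, since [|t i| <= 0] forces [t i = 0] *)
  by move: (ta i); rewrite a0 normr_le0 => /eqP->; rewrite mul0r.
by rewrite mulrCA divff ?mulr1.
Qed.

Lemma scale_gens_coords {n} {Z : zrep R n} {a : 'cV[R]_(zN Z)} {c' x : 'cV[R]_n} :
  (forall i, 0 <= a i ord0) -> zset (scale_gens Z a c') x ->
  exists2 t : 'cV[R]_(zN Z), (forall i, `|t i ord0| <= a i ord0) & x = c' + zG Z *m t.
Proof.
move=> a_ge0 [th [th_le1 ->]]; exists (diag_mx a^T *m th).
  move=> i; rewrite mul_diag_mx !mxE normrM (ger0_norm (a_ge0 i)).
  by rewrite ler_piMr.
by rewrite zG_scale_gens mulmxA.
Qed.

Section OverApproximation.
Context {n nw M : nat} {Z : zrep R n} {E : 'M[R]_(n, nw)} {Wv : 'M[R]_(nw, M)}.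
Context {th : 'M[R]_(zN Z, M)} {a : 'cV[R]_(zN Z)} {c' : 'cV[R]_n}.
Hypothesis feas : over_feasible E Wv th a c'.

Lemma over_feasible_vertex j : E *m col j Wv = c' + zG Z *m col j th.
Proof.
have [<- _] := feas; rewrite mulmx_sum_col; congr (_ + _).
by apply: eq_bigr => i _; rewrite mxE.
Qed.

Lemma over_feasible_conv (l : 'cV[R]_M) : \sum_j l j ord0 = 1 ->
  E *m (Wv *m l) = c' + zG Z *m (th *m l).
Proof.
move=> l1; rewrite (mulmx_sum_col Wv) (mulmx_sum_col th) !mulmx_sumr.
under eq_bigr => j _ do rewrite -scalemxAr over_feasible_vertex scalerDr.
rewrite big_split /= -scaler_suml l1 scale1r.
by under [in RHS]eq_bigr => j _ do rewrite -scalemxAr.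
Qed.

Lemma over_feasible_conv_coords (l : 'cV[R]_M) :
  (forall j, 0 <= l j ord0) -> \sum_j l j ord0 = 1 ->
  forall i, `|(th *m l) i ord0| <= a i ord0.
Proof.
have [_ [th_le _]] := feas; move=> l_ge0 l1 i; rewrite mxE.
apply: le_trans (ler_norm_sum _ _ _) _.
rewrite -[leRHS]mulr1 -l1 mulr_sumr; apply: ler_sum => j _.
by rewrite normrM (ger0_norm (l_ge0 j)) ler_wpM2r.
Qed.

Lemma over_feasible_sub :
  (fun w => E *m w) @` conv_cols Wv `<=` zset (scale_gens Z a c').
Proof.
move=> _ [_ [l [l_ge0 [l1 ->]]] <-].
by rewrite over_feasible_conv //; apply/scale_gens_mem/over_feasible_conv_coords.
Qed.

End OverApproximation.

Lemma under_feasible_sub {n p} {Z : zrep R n} {H : 'M[R]_(p, n)} {h : 'cV[R]_p}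
  {a : 'cV[R]_(zN Z)} {c' : 'cV[R]_n} :
  under_feasible H h a c' -> zset (scale_gens Z a c') `<=` [set x | lev (H *m x) h].
Proof.
move=> [Hh a01] x Zx q.
have a_ge0 i : 0 <= a i ord0 by case/andP: (a01 i).
have [t ta ->] := scale_gens_coords a_ge0 Zx.
apply: le_trans (Hh q); rewrite mulmxDr mulmxA [leLHS]mxE [leRHS]mxE lerD2l.
exact: lev_mulmx_norm.
Qed.

End ScaledZonotope.

Theorem proposition5 (R : realType) (nx nu nw M p : nat)
  (A : 'M[R]_nx) (B : 'M[R]_(nx, nu)) (E : 'M[R]_(nx, nw)) (K : 'cV[R]_nx)
  (ZU : zrep R nu) (W : set 'cV[R]_nw) (Wv : 'M[R]_(nw, M))
  (Z0 : zrep R nx) (H : 'M[R]_(p, nx)) (h : 'cV[R]_p)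
  (b d : nat -> R) (Zlo Zup : nat -> zrep R nx) :
  A \in unitmx ->
  polytope_with_vertices W Wv ->
  (fun w => E *m w) @` W = [set x | lev (H *m x) h] ->
  (forall i, 0 < b i) -> (forall i, 0 <= d i) ->
  Zlo 0%N = Z0 -> Zup 0%N = Z0 ->
  (forall k, exists th a c',
      over_minimizer (Zlo k) E Wv b th a c' /\
      zset (Zlo k.+1) =
        step_set A B K (zset ZU) (zset (Zlo k)) (zset (scale_gens (Zlo k) a c'))) ->
  (forall k, exists a c',
      under_maximizer (Zup k) H h d a c' /\
      zset (Zup k.+1) =
        step_set A B K (zset ZU) (zset (Zup k)) (zset (scale_gens (Zup k) a c'))) ->
  forall k, zset (Zlo k) `<=` Xback A B E K (zset ZU) W (zset Z0) k /\
            Xback A B E K (zset ZU) W (zset Z0) k `<=` zset (Zup k).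
Proof.
move=> A_unit [W_conv _] EW_H _ _ lo0 up0 Hlo Hup.
elim=> [|k [IHlo IHup]]; first by rewrite /= lo0 up0; split.
rewrite XbackS; split.
- have [th [a [c' [[feas _] ->]]]] := Hlo k.
  apply: (step_set_sub_robust_pre A_unit IHlo).
  by rewrite W_conv; exact: over_feasible_sub feas.
- have [a [c' [[feas _] ->]]] := Hup k.
  apply: (robust_pre_sub_step_set A_unit IHup).
  by rewrite EW_H; exact: under_feasible_sub feas.
Qed.
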